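(* For every integer $n\ge1$ and every $u\in V$, $\Pr(E_{7u})<36\left(3\zeta(3)+\tfrac18\right)\dfrac{\ln(2n)}{\ln^{3}(n+1)}$, where $\zeta(3)=\sum_{i\ge1} i^{-3}$.
   Context: For an integer $n\ge1$, the $n$-octahedral graph $G'_n=(V,E')$ is the undirected graph with vertex set $V=\{u\in\mathbb{Z}^3:|u_1|+|u_2|+|u_3|=n\}$ and edge set $E'=\{\{v,w\}\subset V: v\neq w,\ |v_i-w_i|\le 1 \text{ for all } i=1,2,3\}$. For $u,v\in V$, $d_{uv}$ denotes the shortest-path distance in $G'_n$, and $Z_u=\left(\sum_{w\in V\setminus\{u\}} d_{uw}^{-2}\right)^{-1}$. The OSW random graph $G_n=(V,E)$ is the directed graph in which, for every $\{u,v\}\in E'$, both $(u,v),(v,u)\in E$, and in addition each vertex $u\in V$, independently of the others, chooses one vertex $v\in V\setminus\{u\}$ with probability $Z_u d_{uv}^{-2}$ and the long-range edge $(u,v)$ is added; $C_{uv}$ denotes the event that $u$ chooses $v$. For an ordered pair $(x,y)$ of distinct vertices, say $(x,y)$ is of type $s$ if $\{x,y\}\in E'$, and of type $w$ if $d_{xy}\ge2$ and $C_{xy}$ occurs. A C3 rooted at $u$ of type $(t_1,t_2,t_3)\in\{s,w\}^3$ is a triple $(u,a,b)$ of pairwise distinct vertices such that $(u,a)$ is of type $t_1$, $(a,b)$ is of type $t_2$ and $(b,u)$ is of type $t_3$. $E_{7u}$ is the event that there exists a C3 rooted at $u$ of type $(w,w,w)$. *)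

From Stdlib Require Import Reals ZArith List Bool.
Import ListNotations.
Open Scope R_scope.

Definition pt : Type := (Z * Z * Z)%type.

Definition ptb (p q : pt) : bool :=
  match p, q with
  | (x1, y1, z1), (x2, y2, z2) => (Z.eqb x1 x2 && Z.eqb y1 y2 && Z.eqb z1 z2)%bool
  end.

Definition zrange (n : nat) : list Z :=
  map (fun i => (Z.of_nat i - Z.of_nat n)%Z) (seq 0 (2 * n + 1)).

Definition Vn (n : nat) : list pt :=
  filter (fun p : pt => match p with (x, y, z) =>
            Z.eqb (Z.abs x + Z.abs y + Z.abs z) (Z.of_nat n) end)
    (list_prod (list_prod (zrange n) (zrange n)) (zrange n)).

Definition adjb (p q : pt) : bool :=
  match p, q with
  | (x1, y1, z1), (x2, y2, z2) =>
      (negb (ptb p q) && Z.leb (Z.abs (x1 - x2)) 1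
        && Z.leb (Z.abs (y1 - y2)) 1 && Z.leb (Z.abs (z1 - z2)) 1)%bool
  end.

Fixpoint withinb (n k : nat) (u w : pt) : bool :=
  match k with
  | O => ptb u w
  | S k' => (withinb n k' u w ||
             existsb (fun v => withinb n k' u v && adjb v w) (Vn n))%bool
  end.

Fixpoint search (P : nat -> bool) (k0 fuel : nat) : nat :=
  match fuel with
  | O => k0
  | S f => if P k0 then k0 else search P (S k0) f
  end.

(* shortest-path distance d_{uw} in G'_n (G'_n is connected, so the
   distance is < |V| and is found by the search) *)
Definition dist (n : nat) (u w : pt) : nat :=
  search (fun k => withinb n k u w) 0 (length (Vn n)).

Definition Zu (n : nat) (u : pt) : R :=
  / fold_right Rplus 0
      (map (fun w => if ptb u w then 0 else / (INR (dist n u w)) ^ 2) (Vn n)).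

Definition pchoose (n : nat) (u v : pt) : R :=
  if ptb u v then 0 else Zu n u * / (INR (dist n u v)) ^ 2.

(* An outcome of the random long-range choices is recorded as an association
   list of pairs (u, choice of u). *)
Fixpoint lookup (c : list (pt * pt)) (x : pt) : option pt :=
  match c with
  | [] => None
  | (a, b) :: c' => if ptb a x then Some b else lookup c' x
  end.

Definition Cb (c : list (pt * pt)) (x y : pt) : bool :=
  match lookup c x with Some z => ptb z y | None => false end.

Definition typew (n : nat) (c : list (pt * pt)) (x y : pt) : bool :=
  (Nat.leb 2 (dist n x y) && Cb c x y)%bool.

Definition E7 (n : nat) (u : pt) (c : list (pt * pt)) : bool :=
  existsb (fun a => existsb (fun b =>
     (negb (ptb u a) && negb (ptb u b) && negb (ptb a b)
      && typew n c u a && typew n c a b && typew n c b u)%bool) (Vn n)) (Vn n).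

(* Expectation of the indicator of an event under the product measure in which
   every vertex of vs independently chooses w with probability pchoose n v w. *)
Fixpoint prodExp (n : nat) (E : list (pt * pt) -> bool)
    (vs : list pt) (acc : list (pt * pt)) : R :=
  match vs with
  | [] => if E acc then 1 else 0
  | v :: vs' =>
      fold_right Rplus 0
        (map (fun w => pchoose n v w * prodExp n E vs' ((v, w) :: acc)) (Vn n))
  end.

Definition Pr (n : nat) (E : list (pt * pt) -> bool) : R :=
  prodExp n E (Vn n) [].

(* Pr(E_7u) is at most the expected number of long-range cycles u -> a -> b -> u,
   which by independence of the choices is sum_{a,b} p(u,a) p(a,b) p(b,u).
   Each normaliser is large: after a symmetry of the octahedron a vertex (a,b,c)
   has a >= n/3, and for every k <= a it sees the k+1 vertices
   (a-k, b+i, c+k-i) within distance k, so 1/Z_v >= sum_k (k+1)/k^2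
   >= 1 + ln(n/3 + 1).  By AM-GM, p(a,b) p(b,u) <= Z^2 (d_ab^-4 + d_bu^-4)/2,
   and sum_y d_xy^-4 <= 50 by comparison with two coordinate projections.
   Hence Pr(E_7u) <= 50 / (1 + ln(n/3 + 1))^2, which is below the stated
   bound because zeta(3) >= 1 and ln(n+1) < 3/2 (1 + ln(n/3 + 1)). *)

From Pilot Require Import Defs.
From Stdlib Require Import Reals ZArith List Lia Lra FinFun Bool.
Import ListNotations.
Open Scope R_scope.

Definition sumR {A} (l : list A) (f : A -> R) : R := fold_right Rplus 0 (map f l).

Lemma sumR_cons {A} a l (f : A -> R) : sumR (a :: l) f = f a + sumR l f.
Proof. reflexivity. Qed.

Lemma sumR_app {A} l1 l2 (f : A -> R) : sumR (l1 ++ l2) f = sumR l1 f + sumR l2 f.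
Proof. induction l1 as [|a l1 IH]; unfold sumR in *; cbn; [lra|]. rewrite IH. lra. Qed.

Lemma sumR_ext {A} l (f g : A -> R) : (forall x, In x l -> f x = g x) -> sumR l f = sumR l g.
Proof. intros H. unfold sumR. f_equal. apply map_ext_in. exact H. Qed.

Lemma sumR_le {A} l (f g : A -> R) : (forall x, In x l -> f x <= g x) -> sumR l f <= sumR l g.
Proof.
  induction l as [|a l IH]; intros H; cbn; [lra|].
  apply Rplus_le_compat; [apply H; now left|apply IH; intros; apply H; now right].
Qed.

Lemma sumR_0 {A} l : sumR l (fun _ : A => 0) = 0.
Proof. induction l as [|a l IH]; unfold sumR in *; cbn; [lra|]. rewrite IH. lra. Qed.

Lemma sumR_nonneg {A} l (f : A -> R) : (forall x, In x l -> 0 <= f x) -> 0 <= sumR l f.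
Proof. intros H. rewrite <- (sumR_0 l). now apply sumR_le. Qed.

Lemma sumR_add {A} l (f g : A -> R) : sumR l (fun x => f x + g x) = sumR l f + sumR l g.
Proof. induction l as [|a l IH]; unfold sumR in *; cbn; [lra|]. rewrite IH. lra. Qed.

Lemma sumR_mul_l {A} l c (f : A -> R) : sumR l (fun x => c * f x) = c * sumR l f.
Proof. induction l as [|a l IH]; unfold sumR in *; cbn; [lra|]. rewrite IH. lra. Qed.

Lemma sumR_mul_r {A} l c (f : A -> R) : sumR l (fun x => f x * c) = sumR l f * c.
Proof. rewrite Rmult_comm, <- sumR_mul_l. apply sumR_ext. intros. ring. Qed.

Lemma sumR_const {A} l c : sumR l (fun _ : A => c) = INR (length l) * c.
Proof.
  induction l as [|a l IH]; unfold sumR in *; [cbn; lra|].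
  cbn -[INR]. rewrite IH, S_INR. lra.
Qed.

Lemma sumR_comm {A B} (l1 : list A) (l2 : list B) (f : A -> B -> R) :
  sumR l1 (fun a => sumR l2 (f a)) = sumR l2 (fun b => sumR l1 (fun a => f a b)).
Proof.
  induction l1 as [|a l1 IH].
  - symmetry. apply (sumR_0 l2).
  - rewrite sumR_cons, IH, <- sumR_add. apply sumR_ext. reflexivity.
Qed.

Lemma sumR_ge_term {A} l (f : A -> R) x :
  (forall y, In y l -> 0 <= f y) -> In x l -> f x <= sumR l f.
Proof.
  induction l as [|a l IH]; intros H Hx; [destruct Hx|]. rewrite sumR_cons.
  assert (0 <= f a) by (apply H; now left).
  assert (0 <= sumR l f) by (apply sumR_nonneg; intros; apply H; now right).
  destruct Hx as [<-|Hx]; [lra|].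
  assert (f x <= sumR l f) by (apply IH; auto; intros; apply H; now right). lra.
Qed.

Lemma sumR_map {A B} (h : A -> B) l (g : B -> R) : sumR (map h l) g = sumR l (fun a => g (h a)).
Proof. unfold sumR. now rewrite map_map. Qed.

Lemma sumR_flat_map {A B} (h : A -> list B) l (g : B -> R) :
  sumR (flat_map h l) g = sumR l (fun a => sumR (h a) g).
Proof. induction l as [|a l IH]; cbn [flat_map]; [reflexivity|]. now rewrite sumR_app, IH. Qed.

Lemma sumR_filter {A} (P : A -> bool) l (f : A -> R) :
  sumR (filter P l) f = sumR l (fun x => if P x then f x else 0).
Proof.
  induction l as [|a l IH]; cbn [filter]; [reflexivity|].
  rewrite sumR_cons, <- IH. destruct (P a); rewrite ?sumR_cons; lra.
Qed.

Lemma sumR_list_prod {A B} (l1 : list A) (l2 : list B) f :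
  sumR (list_prod l1 l2) f = sumR l1 (fun a => sumR l2 (fun b => f (a, b))).
Proof.
  induction l1 as [|a l1 IH]; cbn [list_prod]; [reflexivity|].
  now rewrite sumR_app, IH, sumR_map.
Qed.

Lemma sumR_le_incl {A} (dec : forall x y : A, {x = y} + {x <> y}) (l L : list A) (f : A -> R) :
  (forall x, In x L -> 0 <= f x) -> NoDup l -> incl l L -> sumR l f <= sumR L f.
Proof.
  revert l. induction L as [|a L IH]; intros l Hf Hnd Hin.
  - destruct l as [|x l]; [apply Rle_refl|]. destruct (Hin x (or_introl eq_refl)).
  - rewrite sumR_cons. assert (0 <= f a) by (apply Hf; now left).
    destruct (in_dec dec a l) as [Ha|Ha].
    + destruct (in_split _ _ Ha) as (l1 & l2 & ->).
      rewrite sumR_app, sumR_cons.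
      assert (sumR (l1 ++ l2) f <= sumR L f); [|rewrite sumR_app in *; lra].
      apply IH; [intros; apply Hf; now right|eapply NoDup_remove_1; eauto|].
      intros y Hy. assert (y <> a) by (intros ->; exact (NoDup_remove_2 _ _ _ Hnd Hy)).
      destruct (Hin y) as [E|E]; [|congruence|exact E].
      apply in_app_or in Hy. apply in_or_app. destruct Hy; [left|right; right]; auto.
    + assert (sumR l f <= sumR L f); [|lra].
      apply IH; auto; [intros; apply Hf; now right|].
      intros y Hy. destruct (Hin y Hy) as [<-|E]; [contradiction|exact E].
Qed.

(** * The octahedral graph and its distance *)

Lemma pt_dec (p q : pt) : {p = q} + {p <> q}.
Proof. repeat decide equality. Qed.

Lemma ptb_spec p q : ptb p q = true <-> p = q.
Proof.
  destruct p as [[a b] c], q as [[d e] f]. cbn.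
  rewrite !andb_true_iff, !Z.eqb_eq. split; [intros [[-> ->] ->]; auto|].
  intros H; inversion H; auto.
Qed.

Lemma ptb_refl p : ptb p p = true.
Proof. now apply ptb_spec. Qed.

Lemma ptb_false p q : p <> q -> ptb p q = false.
Proof. rewrite <- ptb_spec. apply not_true_is_false. Qed.

Definition px (p : pt) : Z := fst (fst p).
Definition py (p : pt) : Z := snd (fst p).
Definition pz (p : pt) : Z := snd p.

Lemma pt_eta p : p = (px p, py p, pz p).
Proof. now destruct p as [[a b] c]. Qed.

Lemma pt_ext p q : px p = px q -> py p = py q -> pz p = pz q -> p = q.
Proof. rewrite (pt_eta p), (pt_eta q). cbn. congruence. Qed.

Lemma adjb_spec p q : adjb p q = true <->
  p <> q /\ (Z.abs (px p - px q) <= 1 /\ Z.abs (py p - py q) <= 1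
             /\ Z.abs (pz p - pz q) <= 1)%Z.
Proof.
  unfold adjb. destruct p as [[a b] c], q as [[d e] f]. cbn -[ptb].
  rewrite !andb_true_iff, !Z.leb_le, negb_true_iff, <- not_true_iff_false, ptb_spec.
  tauto.
Qed.

Lemma in_zrange n z : In z (zrange n) <-> (- Z.of_nat n <= z <= Z.of_nat n)%Z.
Proof.
  unfold zrange. rewrite in_map_iff. split.
  - intros (i & <- & Hi). apply in_seq in Hi. lia.
  - intros H. exists (Z.to_nat (z + Z.of_nat n)). rewrite in_seq. lia.
Qed.

Lemma NoDup_zrange n : NoDup (zrange n).
Proof. apply Injective_map_NoDup; [intros x y; lia|apply seq_NoDup]. Qed.

Lemma NoDup_list_prod {A B} (l1 : list A) (l2 : list B) :
  NoDup l1 -> NoDup l2 -> NoDup (list_prod l1 l2).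
Proof.
  induction 1 as [|a l1 Ha Hl1 IH]; intros H2; cbn; [constructor|].
  apply NoDup_app; auto.
  - apply Injective_map_NoDup; [intros x y E; now inversion E|exact H2].
  - intros [x y] Hx Hy. apply in_map_iff in Hx as (z & E & _). inversion E; subst.
    apply in_prod_iff in Hy as [Hy _]. contradiction.
Qed.

Lemma in_Vn n p :
  In p (Vn n) <-> (Z.abs (px p) + Z.abs (py p) + Z.abs (pz p) = Z.of_nat n)%Z.
Proof.
  destruct p as [[a b] c]. unfold Vn, px, py, pz. cbn [fst snd].
  rewrite filter_In, (in_prod_iff _ _ (a, b) c), in_prod_iff, !in_zrange, Z.eqb_eq. lia.
Qed.

Lemma NoDup_Vn n : NoDup (Vn n).
Proof. apply NoDup_filter. repeat apply NoDup_list_prod; apply NoDup_zrange. Qed.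

Lemma length_Vn_ge n : (2 * n + 1 <= length (Vn n))%nat.
Proof.
  set (l := map (fun z => (z, (Z.of_nat n - Z.abs z)%Z, 0%Z)) (zrange n)).
  replace (2 * n + 1)%nat with (length l)
    by (unfold l, zrange; now rewrite !length_map, length_seq).
  apply NoDup_incl_length.
  - apply Injective_map_NoDup; [intros x y E; now inversion E|apply NoDup_zrange].
  - intros p Hp. apply in_map_iff in Hp as (z & <- & Hz).
    apply in_zrange in Hz. apply in_Vn. cbn. lia.
Qed.

Definition chebyshev_le (k : nat) (u w : pt) : Prop :=
  (Z.abs (px u - px w) <= Z.of_nat k /\ Z.abs (py u - py w) <= Z.of_nat k
   /\ Z.abs (pz u - pz w) <= Z.of_nat k)%Z.

Lemma chebyshev_le_sym k u w : chebyshev_le k u w -> chebyshev_le k w u.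
Proof. unfold chebyshev_le. lia. Qed.

Lemma withinb_step n k u v w :
  withinb n k u v = true -> In v (Vn n) -> adjb v w = true -> withinb n (S k) u w = true.
Proof.
  intros H1 H2 H3. cbn. apply orb_true_iff. right. apply existsb_exists.
  exists v. now rewrite H1, H3.
Qed.

Lemma withinb_chebyshev_le n k u w : withinb n k u w = true -> chebyshev_le k u w.
Proof.
  revert w. induction k as [|k IH]; intros w H; cbn in H.
  - apply ptb_spec in H as <-. unfold chebyshev_le. lia.
  - apply orb_true_iff in H as [H|H].
    + apply IH in H. unfold chebyshev_le in *. lia.
    + apply existsb_exists in H as (v & _ & H). apply andb_true_iff in H as [H1 H2].
      apply IH in H1. apply adjb_spec in H2. unfold chebyshev_le in *. lia.
Qed.

Lemma search_le P k0 fuel k : P k = true -> (k0 <= k)%nat -> (search P k0 fuel <= k)%nat.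
Proof.
  revert k0. induction fuel as [|fuel IH]; intros k0 H1 H2; cbn; [exact H2|].
  destruct (P k0) eqn:E; [exact H2|]. apply IH; [exact H1|].
  destruct (Nat.eq_dec k0 k); [congruence|lia].
Qed.

Lemma search_spec P k0 fuel : P (search P k0 fuel) = true \/ search P k0 fuel = (k0 + fuel)%nat.
Proof.
  revert k0. induction fuel as [|fuel IH]; intros k0; cbn; [right; lia|].
  destruct (P k0) eqn:E; [now left|]. destruct (IH (S k0)); [now left|right; lia].
Qed.

Lemma dist_le_withinb n k u w : withinb n k u w = true -> (Defs.dist n u w <= k)%nat.
Proof. intros H. apply search_le with (P := fun k => withinb n k u w); [exact H|lia]. Qed.

(* When the search runs out of fuel, [dist] is [|V| >= 2n+1], which still
   dominates the sup-distance of two points of [V]. *)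
Lemma dist_chebyshev_le n u w :
  In u (Vn n) -> In w (Vn n) -> chebyshev_le (Defs.dist n u w) u w.
Proof.
  intros Hu Hw. unfold Defs.dist.
  destruct (search_spec (fun k => withinb n k u w) 0 (length (Vn n))) as [H|E].
  - exact (withinb_chebyshev_le _ _ _ _ H).
  - rewrite E. pose proof (length_Vn_ge n). apply in_Vn in Hu, Hw. unfold chebyshev_le. lia.
Qed.

Lemma dist_ge_1 n u w : In u (Vn n) -> In w (Vn n) -> u <> w -> (1 <= Defs.dist n u w)%nat.
Proof.
  intros Hu Hw Hne. pose proof (dist_chebyshev_le n u w Hu Hw) as H.
  destruct (Nat.eq_dec (Defs.dist n u w) 0) as [E|E]; [|lia].
  rewrite E in H. unfold chebyshev_le in H. exfalso. apply Hne, pt_ext; lia.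
Qed.

(** * Symmetries of the octahedron *)

Record is_symmetry (n : nat) (t : pt -> pt) : Prop := {
  symmetry_Vn : forall p, In p (Vn n) -> In (t p) (Vn n);
  symmetry_adjb : forall p q, adjb p q = true -> adjb (t p) (t q) = true;
  symmetry_inj : Injective t }.

Definition abs_sum (p : pt) : Z := (Z.abs (px p) + Z.abs (py p) + Z.abs (pz p))%Z.
Definition sup_diff (p q : pt) : Z :=
  Z.max (Z.abs (px p - px q)) (Z.max (Z.abs (py p - py q)) (Z.abs (pz p - pz q))).

Lemma adjb_sup_diff p q : adjb p q = true <-> p <> q /\ (sup_diff p q <= 1)%Z.
Proof. rewrite adjb_spec. unfold sup_diff. split; intros [H1 H2]; split; auto; lia. Qed.

Lemma is_symmetry_intro n t :
  Injective t -> (forall p, abs_sum (t p) = abs_sum p) ->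
  (forall p q, sup_diff (t p) (t q) = sup_diff p q) -> is_symmetry n t.
Proof.
  intros Hinj Hsum Hdiff. split; [|intros p q|exact Hinj].
  - intros p. rewrite !in_Vn. fold (abs_sum p) (abs_sum (t p)). now rewrite Hsum.
  - rewrite !adjb_sup_diff, Hdiff. intros [Hne H]. split; [|exact H].
    intros E. exact (Hne (Hinj _ _ E)).
Qed.

Lemma is_symmetry_comp n f g :
  is_symmetry n f -> is_symmetry n g -> is_symmetry n (fun p => f (g p)).
Proof.
  intros [F1 F2 F3] [G1 G2 G3]. split; auto.
  intros p q E. exact (G3 _ _ (F3 _ _ E)).
Qed.

Definition sign_flip (s1 s2 s3 : Z) (p : pt) : pt := (s1 * px p, s2 * py p, s3 * pz p)%Z.
Definition swap12 (p : pt) : pt := (py p, px p, pz p).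
Definition swap13 (p : pt) : pt := (pz p, py p, px p).

Lemma is_symmetry_sign_flip n s1 s2 s3 :
  Z.abs s1 = 1%Z -> Z.abs s2 = 1%Z -> Z.abs s3 = 1%Z -> is_symmetry n (sign_flip s1 s2 s3).
Proof.
  intros H1 H2 H3. apply is_symmetry_intro.
  - intros p q E. injection E as E1 E2 E3. apply pt_ext; nia.
  - intros p. unfold abs_sum, sign_flip, px, py, pz. cbn. rewrite !Z.abs_mul. lia.
  - intros p q. unfold sup_diff, sign_flip, px, py, pz. cbn.
    rewrite <- !Z.mul_sub_distr_l, !Z.abs_mul. lia.
Qed.

Lemma is_symmetry_swap12 n : is_symmetry n swap12.
Proof.
  apply is_symmetry_intro.
  - intros p q E. injection E as E1 E2 E3. now apply pt_ext.
  - intros p. unfold abs_sum, swap12, px, py, pz. cbn. lia.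
  - intros p q. unfold sup_diff, swap12, px, py, pz. cbn. lia.
Qed.

Lemma is_symmetry_swap13 n : is_symmetry n swap13.
Proof.
  apply is_symmetry_intro.
  - intros p q E. injection E as E1 E2 E3. now apply pt_ext.
  - intros p. unfold abs_sum, swap13, px, py, pz. cbn. lia.
  - intros p q. unfold sup_diff, swap13, px, py, pz. cbn. lia.
Qed.

Lemma withinb_symmetry n t k u w :
  is_symmetry n t -> withinb n k u w = true -> withinb n k (t u) (t w) = true.
Proof.
  intros [T1 T2 _]. revert w. induction k as [|k IH]; intros w H; cbn in H.
  - apply ptb_spec in H as <-. apply ptb_refl.
  - apply orb_true_iff in H as [H|H].
    + cbn. now rewrite IH.
    + apply existsb_exists in H as (v & Hv & H). apply andb_true_iff in H as [H1 H2].
      apply withinb_step with (t v); auto.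
Qed.

Lemma canonical_form n u :
  In u (Vn n) -> exists t a b c, is_symmetry n t /\
    (0 <= a /\ 0 <= b /\ 0 <= c /\ a + b + c = Z.of_nat n /\ Z.of_nat n <= 3 * a)%Z /\
    u = t (a, b, c).
Proof.
  intros Hu. apply in_Vn in Hu.
  set (sgn := fun z : Z => if (z <? 0)%Z then (-1)%Z else 1%Z).
  assert (Hs : forall z, Z.abs (sgn z) = 1%Z) by (intros z; unfold sgn; now destruct (z <? 0)%Z).
  assert (Hs2 : forall z, (sgn z * Z.abs z = z)%Z)
    by (intros z; unfold sgn; destruct (Z.ltb_spec z 0); lia).
  set (fl := sign_flip (sgn (px u)) (sgn (py u)) (sgn (pz u))).
  assert (Gf : is_symmetry n fl) by (apply is_symmetry_sign_flip; auto).
  assert (E0 : fl (Z.abs (px u), Z.abs (py u), Z.abs (pz u)) = u).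
  { unfold fl, sign_flip, px, py, pz. cbn. rewrite !Hs2. symmetry. apply pt_eta. }
  destruct (Z.le_ge_cases (Z.abs (py u)) (Z.abs (px u)));
  destruct (Z.le_ge_cases (Z.abs (pz u)) (Z.abs (px u)));
  destruct (Z.le_ge_cases (Z.abs (pz u)) (Z.abs (py u))).
  all: first
   [ exists fl, (Z.abs (px u)), (Z.abs (py u)), (Z.abs (pz u)); split; [auto|split; [lia|auto]]
   | exists (fun p => fl (swap12 p)), (Z.abs (py u)), (Z.abs (px u)), (Z.abs (pz u)); split;
       [apply is_symmetry_comp; auto; apply is_symmetry_swap12|split; [lia|auto]]
   | exists (fun p => fl (swap13 p)), (Z.abs (pz u)), (Z.abs (py u)), (Z.abs (px u)); split;
       [apply is_symmetry_comp; auto; apply is_symmetry_swap13|split; [lia|auto]] ].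
Qed.

Lemma withinb_staircase n (a b c : Z) (i j : nat) :
  (0 <= b /\ 0 <= c /\ a + b + c = Z.of_nat n /\ Z.of_nat (i + j) <= a)%Z ->
  withinb n (i + j) (a, b, c) (a - Z.of_nat i - Z.of_nat j, b + Z.of_nat i, c + Z.of_nat j)%Z
  = true.
Proof.
  intros H.
  assert (HV : forall x y z, (0 <= x /\ 0 <= y /\ 0 <= z /\ x + y + z = Z.of_nat n)%Z ->
                 In (x, y, z) (Vn n))
    by (intros x y z Hx; apply in_Vn; cbn; lia).
  induction j as [|j IHj].
  - induction i as [|i IHi].
    + cbn [withinb Nat.add]. apply ptb_spec. f_equal; [f_equal|]; lia.
    + rewrite Nat.add_0_r in *.
      apply withinb_step with (a - Z.of_nat i - 0, b + Z.of_nat i, c + 0)%Z.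
      * apply IHi. lia.
      * apply HV. lia.
      * apply adjb_spec. cbn. split; [intros E; injection E; lia|lia].
  - rewrite Nat.add_succ_r.
    apply withinb_step with (a - Z.of_nat i - Z.of_nat j, b + Z.of_nat i, c + Z.of_nat j)%Z.
    + apply IHj. lia.
    + apply HV. lia.
    + apply adjb_spec. cbn. split; [intros E; injection E; lia|lia].
Qed.

Lemma Rinv_nonneg x : 0 <= x -> 0 <= / x.
Proof. intros [H|<-]; [left; now apply Rinv_0_lt_compat|rewrite Rinv_0; lra]. Qed.

Lemma ln_le x y : 0 < x -> x <= y -> ln x <= ln y.
Proof. intros Hx [H|<-]; [left; now apply ln_increasing|lra]. Qed.

Lemma ln_nonneg x : 1 <= x -> 0 <= ln x.
Proof. intros H. rewrite <- ln_1. apply ln_le; lra. Qed.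

Lemma ln_le_of_le_exp y z : 0 < y -> y <= exp z -> ln y <= z.
Proof. intros H1 H2. rewrite <- (ln_exp z). now apply ln_le. Qed.

Lemma ln_1_plus_le x : 0 < x -> ln (1 + x) <= x.
Proof. intros H. apply ln_le_of_le_exp; [lra|apply exp_ineq1_le]. Qed.

(** * Lower bound on the normalising sums *)

Definition weight (n : nat) (x w : pt) : R :=
  if ptb x w then 0 else / INR (Defs.dist n x w) ^ 2.

Definition norm_sum (n : nat) (x : pt) : R := sumR (Vn n) (weight n x).

Lemma Zu_norm_sum n x : Zu n x = / norm_sum n x.
Proof. reflexivity. Qed.

Lemma pchoose_weight n x w : pchoose n x w = Zu n x * weight n x w.
Proof. unfold pchoose, weight. destruct (ptb x w); ring. Qed.

Lemma weight_nonneg n x w : 0 <= weight n x w.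
Proof. unfold weight. destruct (ptb x w); [lra|apply Rinv_nonneg, pow2_ge_0]. Qed.

Lemma norm_sum_nonneg n x : 0 <= norm_sum n x.
Proof. apply sumR_nonneg. intros. apply weight_nonneg. Qed.

Definition triangle_pairs (A : nat) : list (nat * nat) :=
  flat_map (fun k => map (fun i => (k, i)) (seq 0 (S k))) (seq 1 A).

Lemma in_triangle_pairs A k i : In (k, i) (triangle_pairs A) -> (1 <= k <= A /\ i <= k)%nat.
Proof.
  unfold triangle_pairs. rewrite in_flat_map. intros (k' & Hk & H).
  apply in_map_iff in H as (i' & E & Hi). injection E as <- <-.
  apply in_seq in Hk, Hi. lia.
Qed.

Lemma NoDup_triangle_pairs A : NoDup (triangle_pairs A).
Proof.
  unfold triangle_pairs. generalize 1%nat as s.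
  induction A as [|A IH]; intros s; cbn [seq flat_map]; [constructor|].
  apply NoDup_app; [|apply IH|].
  - apply Injective_map_NoDup; [intros x y E; now injection E|apply (seq_NoDup (S s) 0)].
  - intros [k i] H1 H2. apply in_map_iff in H1 as (z & E & _). injection E as <- <-.
    apply in_flat_map in H2 as (k' & Hk' & H2). apply in_map_iff in H2 as (z' & E & _).
    injection E as <- <-. apply in_seq in Hk'. lia.
Qed.

Lemma sumR_triangle_pairs A :
  sumR (triangle_pairs A) (fun ki => / INR (fst ki) ^ 2)
  = sumR (seq 1 A) (fun k => (INR k + 1) / INR k ^ 2).
Proof.
  unfold triangle_pairs. rewrite sumR_flat_map. apply sumR_ext. intros k _.
  rewrite sumR_map. cbn [fst]. rewrite sumR_const, length_seq, S_INR. unfold Rdiv. ring.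
Qed.

(* Telescoping: ln (k + 1) - ln k = ln (1 + 1/k) <= 1/k <= (k + 1) / k^2. *)
Lemma sum_succ_div_sq_ge A :
  (1 <= A)%nat -> 1 + ln (INR A + 1) <= sumR (seq 1 A) (fun k => (INR k + 1) / INR k ^ 2).
Proof.
  induction A as [|A IH]; intros H; [lia|]. destruct A as [|A].
  - cbn. pose proof (ln_1_plus_le 1). lra.
  - rewrite seq_S, sumR_app, sumR_cons. cbn [sumR map fold_right]. specialize (IH ltac:(lia)).
    set (a := INR (S A)) in *.
    replace (INR (1 + S A)) with (a + 1) by (unfold a; rewrite plus_INR; cbn; lra).
    rewrite S_INR. fold a.
    assert (Ha : 1 <= a) by (unfold a; rewrite S_INR; pose proof (pos_INR A); lra).
    assert (Hln : ln (a + 1 + 1) - ln (a + 1) <= / (a + 1)).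
    { replace (a + 1 + 1) with ((a + 1) * (1 + / (a + 1))) by (field; lra).
      assert (0 < / (a + 1)) by (apply Rinv_0_lt_compat; lra).
      rewrite ln_mult by lra. pose proof (ln_1_plus_le (/ (a + 1))). lra. }
    assert (/ (a + 1) <= (a + 1 + 1) / (a + 1) ^ 2).
    { unfold Rdiv. replace ((a + 1 + 1) * / (a + 1) ^ 2) with (/ (a + 1) + / (a + 1) ^ 2)
        by (field; lra).
      assert (0 < / (a + 1) ^ 2) by (apply Rinv_0_lt_compat; nra). lra. }
    lra.
Qed.

Lemma norm_sum_ge n x : (1 <= n)%nat -> In x (Vn n) -> 1 + ln (INR n / 3 + 1) <= norm_sum n x.
Proof.
  intros Hn Hx.
  destruct (canonical_form n x Hx) as (t & a & b & c & Gt & Habc & ->).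
  set (A := Z.to_nat a).
  set (fam := fun ki : nat * nat => let (k, i) := ki in
     t (a - Z.of_nat i - Z.of_nat (k - i), b + Z.of_nat i, c + Z.of_nat (k - i))%Z).
  assert (Hfam : forall k i, In (k, i) (triangle_pairs A) ->
     In (fam (k, i)) (Vn n) /\ fam (k, i) <> t (a, b, c)
     /\ (Defs.dist n (t (a, b, c)) (fam (k, i)) <= k)%nat).
  { intros k i Hki. apply in_triangle_pairs in Hki. unfold A in Hki. cbn. split; [|split].
    - apply (symmetry_Vn _ _ Gt), in_Vn. cbn. lia.
    - intros E. apply (symmetry_inj _ _ Gt) in E. injection E. lia.
    - apply Nat.le_trans with (i + (k - i))%nat; [|lia].
      apply dist_le_withinb, (withinb_symmetry _ _ _ _ _ Gt), withinb_staircase. lia. }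
  assert (HA : INR n / 3 + 1 <= INR A + 1).
  { unfold A. rewrite !INR_IZR_INZ, Z2Nat.id by lia.
    assert (IZR (Z.of_nat n) <= 3 * IZR a) by (rewrite <- mult_IZR; apply IZR_le; lia). lra. }
  assert (Hln : ln (INR n / 3 + 1) <= ln (INR A + 1))
    by (apply ln_le; [pose proof (pos_INR n)|]; lra).
  apply Rle_trans with (sumR (map fam (triangle_pairs A)) (weight n (t (a, b, c)))).
  - rewrite sumR_map.
    apply Rle_trans with (sumR (triangle_pairs A) (fun ki => / INR (fst ki) ^ 2)).
    + rewrite sumR_triangle_pairs.
      pose proof (sum_succ_div_sq_ge A ltac:(unfold A; lia)). lra.
    + apply sumR_le. intros [k i] Hki. destruct (Hfam k i Hki) as (H1 & H2 & H3).
      unfold weight. rewrite ptb_false by congruence. cbn [fst].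
      pose proof (dist_ge_1 n _ _ Hx H1 (not_eq_sym H2)).
      apply Rinv_le_contravar; [apply pow_lt, lt_0_INR; lia|].
      apply pow_incr. split; [apply pos_INR|apply le_INR; exact H3].
  - apply sumR_le_incl; [exact pt_dec|intros; apply weight_nonneg| |].
    + apply NoDup_map_NoDup_ForallPairs; [|apply NoDup_triangle_pairs].
      intros [k i] [k' i'] H1 H2 E. apply in_triangle_pairs in H1, H2.
      apply (symmetry_inj _ _ Gt) in E. injection E. intros. f_equal; lia.
    + intros w Hw. apply in_map_iff in Hw as ([k i] & <- & Hki). now apply Hfam.
Qed.

(** * Fourth powers of the weights *)

Definition hsq (z : Z) : R := / IZR (Z.max (Z.abs z) 1) ^ 2.

(* A bounded primitive of [hsq]: its increments dominate [hsq] because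
   [1 / J^2 <= 2 / (2J - 1) - 2 / (2J + 1)] for [J >= 1]. *)
Definition hsq_primitive (j : Z) : R :=
  if (1 <=? j)%Z then 5 - 2 / (2 * IZR j - 1) else 2 / (1 - 2 * IZR j).

Lemma inv_sq_le_telescope J : 1 <= J -> / J ^ 2 <= 2 / (2 * J - 1) - 2 / (2 * J + 1).
Proof.
  intros H. replace (2 / (2 * J - 1) - 2 / (2 * J + 1)) with (/ (J ^ 2 - / 4))
    by (field; repeat split; nra).
  apply Rinv_le_contravar; nra.
Qed.

Lemma hsq_le_primitive_step j : hsq j <= hsq_primitive (j + 1) - hsq_primitive j.
Proof.
  unfold hsq, hsq_primitive.
  destruct (Z.leb_spec 1 j); destruct (Z.leb_spec 1 (j + 1)); try lia.
  - rewrite Z.max_l, Z.abs_eq, plus_IZR by lia.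
    assert (1 <= IZR j) by (apply IZR_le; lia).
    pose proof (inv_sq_le_telescope (IZR j) H1).
    replace (2 * (IZR j + 1) - 1) with (2 * IZR j + 1) by ring. lra.
  - replace j with 0%Z by lia. cbn. lra.
  - rewrite Z.max_l, Z.abs_neq, opp_IZR, plus_IZR by lia.
    assert (1 <= - IZR j) by (rewrite <- opp_IZR; apply IZR_le; lia).
    pose proof (inv_sq_le_telescope (- IZR j) H1).
    replace (1 - 2 * (IZR j + 1)) with (2 * - IZR j - 1) by ring.
    replace (1 - 2 * IZR j) with (2 * - IZR j + 1) by ring. lra.
Qed.

Lemma two_div_bounds x : 1 <= x -> 0 < 2 / x <= 2.
Proof.
  intros H. split; [apply Rdiv_lt_0_compat; lra|].
  apply Rmult_le_reg_r with x; [lra|]. unfold Rdiv. rewrite Rmult_assoc, Rinv_l; lra.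
Qed.

Lemma hsq_primitive_bounds j : 0 <= hsq_primitive j <= 5.
Proof.
  unfold hsq_primitive. destruct (Z.leb_spec 1 j).
  - assert (1 <= IZR j) by (apply IZR_le; lia).
    pose proof (two_div_bounds (2 * IZR j - 1)). lra.
  - assert (IZR j <= 0) by (apply IZR_le; lia).
    pose proof (two_div_bounds (1 - 2 * IZR j)). lra.
Qed.

Lemma hsq_pos z : 0 < hsq z.
Proof. apply Rinv_0_lt_compat, pow_lt, IZR_lt. lia. Qed.

Lemma sumR_hsq_seq s N :
  sumR (seq 0 N) (fun i => hsq (s + Z.of_nat i))
  <= hsq_primitive (s + Z.of_nat N) - hsq_primitive s.
Proof.
  induction N as [|N IH].
  - cbn. rewrite Z.add_0_r. lra.
  - rewrite seq_S, sumR_app, sumR_cons. cbn [sumR map fold_right Nat.add].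
    pose proof (hsq_le_primitive_step (s + Z.of_nat N)).
    replace (s + Z.of_nat (S N))%Z with (s + Z.of_nat N + 1)%Z by lia. lra.
Qed.

Lemma sumR_hsq_zrange_le n x : sumR (zrange n) (fun z => hsq (z - x)) <= 5.
Proof.
  unfold zrange. rewrite sumR_map.
  rewrite (sumR_ext _ _ (fun i => hsq ((- Z.of_nat n - x) + Z.of_nat i)))
    by (intros; f_equal; lia).
  pose proof (sumR_hsq_seq (- Z.of_nat n - x) (2 * n + 1)).
  pose proof (hsq_primitive_bounds (- Z.of_nat n - x + Z.of_nat (2 * n + 1))).
  pose proof (hsq_primitive_bounds (- Z.of_nat n - x)). lra.
Qed.

Lemma count_abs_le l m : NoDup l -> sumR l (fun z => if (Z.abs z =? m)%Z then 1 else 0) <= 2.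
Proof.
  intros Hl. rewrite <- (sumR_filter _ _ (fun _ => 1)), sumR_const, Rmult_1_r.
  replace 2 with (INR (length [m; (- m)%Z])) by (cbn; lra).
  apply le_INR, NoDup_incl_length; [now apply NoDup_filter|].
  intros z Hz. apply filter_In in Hz as [_ Hz]. apply Z.eqb_eq in Hz. cbn. lia.
Qed.

(* A vertex is determined, up to the sign of its last coordinate, by its first two. *)
Lemma sumR_Vn_proj_le n (H : Z -> Z -> R) : (forall a b, 0 <= H a b) ->
  sumR (Vn n) (fun y => H (px y) (py y))
  <= 2 * sumR (zrange n) (fun a => sumR (zrange n) (fun b => H a b)).
Proof.
  intros Hp. unfold Vn. rewrite sumR_filter, (sumR_list_prod (A := Z * Z) (B := Z)).
  rewrite sumR_list_prod, <- sumR_mul_l.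
  apply sumR_le. intros a _. rewrite <- sumR_mul_l. apply sumR_le. intros b _.
  cbn [px py pz fst snd].
  set (m := (Z.of_nat n - Z.abs a - Z.abs b)%Z).
  rewrite (sumR_ext _ _ (fun c => H a b * (if (Z.abs c =? m)%Z then 1 else 0))).
  - rewrite sumR_mul_l. pose proof (count_abs_le (zrange n) m (NoDup_zrange n)).
    pose proof (Hp a b). nra.
  - intros c _. unfold m. destruct (Z.eqb_spec (Z.abs a + Z.abs b + Z.abs c) (Z.of_nat n));
      destruct (Z.eqb_spec (Z.abs c) (Z.of_nat n - Z.abs a - Z.abs b)); try lia; lra.
Qed.

Lemma inv_sq_sq_le_hsq x y (d : nat) : chebyshev_le d x y -> (1 <= d)%nat ->
  (/ INR d ^ 2) ^ 2 <= hsq (px y - px x) * hsq (py y - py x).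
Proof.
  intros (H1 & H2 & _) Hd.
  assert (Hz : forall z : Z, (Z.abs z <= Z.of_nat d)%Z -> / INR d ^ 2 <= hsq z).
  { intros z Hz. apply Rinv_le_contravar; [apply pow_lt, IZR_lt; lia|].
    apply pow_incr. split; [apply IZR_le; lia|]. rewrite INR_IZR_INZ. apply IZR_le. lia. }
  assert (0 <= / INR d ^ 2) by (apply Rinv_nonneg, pow2_ge_0).
  rewrite <- Rsqr_pow2. apply Rmult_le_compat; auto; apply Hz; lia.
Qed.

(* [50 = 2 * 5 * 5]: two one-dimensional sums of [hsq], each at most 5. *)
Lemma sumR_inv_dist4_le n x (D : pt -> nat) :
  (forall y, In y (Vn n) -> x <> y -> chebyshev_le (D y) x y /\ (1 <= D y)%nat) ->
  sumR (Vn n) (fun y => if ptb x y then 0 else (/ INR (D y) ^ 2) ^ 2) <= 50.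
Proof.
  intros HD.
  apply Rle_trans with (sumR (Vn n) (fun y => hsq (px y - px x) * hsq (py y - py x))).
  - apply sumR_le. intros y Hy.
    pose proof (hsq_pos (px y - px x)). pose proof (hsq_pos (py y - py x)).
    destruct (ptb x y) eqn:E; [nra|].
    destruct (pt_dec x y) as [->|Hne]; [now rewrite ptb_refl in E|].
    destruct (HD y Hy Hne). now apply inv_sq_sq_le_hsq.
  - pose proof (sumR_hsq_zrange_le n (px x)). pose proof (sumR_hsq_zrange_le n (py x)).
    set (g := fun a b => hsq (a - px x) * hsq (b - py x)).
    set (Sx := sumR (zrange n) (fun a => hsq (a - px x))) in *.
    set (Sy := sumR (zrange n) (fun b => hsq (b - py x))) in *.
    assert (Hsum : sumR (zrange n) (fun a => sumR (zrange n) (fun b => g a b)) = Sx * Sy).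
    { unfold Sx. rewrite <- sumR_mul_r. apply sumR_ext. intros a _. apply sumR_mul_l. }
    assert (0 <= Sx) by (apply sumR_nonneg; intros; apply Rlt_le, hsq_pos).
    assert (0 <= Sy) by (apply sumR_nonneg; intros; apply Rlt_le, hsq_pos).
    assert (Hg : forall a b, 0 <= g a b)
      by (intros; apply Rlt_le, Rmult_lt_0_compat; apply hsq_pos).
    eapply Rle_trans; [exact (sumR_Vn_proj_le n g Hg)|]. rewrite Hsum. nra.
Qed.

Lemma sumR_weight_sq_le n x : In x (Vn n) -> sumR (Vn n) (fun y => weight n x y ^ 2) <= 50.
Proof.
  intros Hx.
  rewrite (sumR_ext _ _ (fun y => if ptb x y then 0 else (/ INR (Defs.dist n x y) ^ 2) ^ 2))
    by (intros y _; unfold weight; destruct (ptb x y); [ring|reflexivity]).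
  apply sumR_inv_dist4_le. intros y Hy Hne.
  split; [apply dist_chebyshev_le|apply dist_ge_1]; auto.
Qed.

Lemma sumR_weight_sq_rev_le n x : In x (Vn n) -> sumR (Vn n) (fun y => weight n y x ^ 2) <= 50.
Proof.
  intros Hx.
  rewrite (sumR_ext _ _ (fun y => if ptb x y then 0 else (/ INR (Defs.dist n y x) ^ 2) ^ 2)).
  - apply sumR_inv_dist4_le. intros y Hy Hne.
    split; [apply chebyshev_le_sym, dist_chebyshev_le|apply dist_ge_1]; auto.
  - intros y _. unfold weight. destruct (pt_dec x y) as [->|Hne].
    + rewrite ptb_refl. ring.
    + rewrite !ptb_false by auto. reflexivity.
Qed.

(** * The product measure *)

Lemma pchoose_nonneg n v w : 0 <= pchoose n v w.
Proof.
  rewrite pchoose_weight, Zu_norm_sum.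
  apply Rmult_le_pos; [apply Rinv_nonneg, norm_sum_nonneg|apply weight_nonneg].
Qed.

Lemma sumR_pchoose n v : 0 < norm_sum n v -> sumR (Vn n) (pchoose n v) = 1.
Proof.
  intros H.
  rewrite (sumR_ext _ _ (fun w => Zu n v * weight n v w)) by (intros; apply pchoose_weight).
  rewrite sumR_mul_l, Zu_norm_sum. fold (norm_sum n v). field. lra.
Qed.

Fixpoint expect (n : nat) (F : list (pt * pt) -> R) (vs : list pt) (acc : list (pt * pt))
  : R :=
  match vs with
  | [] => F acc
  | v :: vs' => sumR (Vn n) (fun w => pchoose n v w * expect n F vs' ((v, w) :: acc))
  end.

Lemma prodExp_expect n E vs acc :
  prodExp n E vs acc = expect n (fun c => if E c then 1 else 0) vs acc.
Proof.
  revert acc. induction vs as [|v vs IH]; intros acc; cbn [expect prodExp]; [reflexivity|].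
  unfold sumR. f_equal. apply map_ext. intros w. now rewrite IH.
Qed.

Lemma expect_le n F G vs acc : (forall c, F c <= G c) -> expect n F vs acc <= expect n G vs acc.
Proof.
  intros H. revert acc. induction vs as [|v vs IH]; intros acc; cbn [expect]; [apply H|].
  apply sumR_le. intros w _. apply Rmult_le_compat_l; [apply pchoose_nonneg|apply IH].
Qed.

Lemma expect_0 n vs acc : expect n (fun _ => 0) vs acc = 0.
Proof.
  revert acc. induction vs as [|v vs IH]; intros acc; cbn [expect]; [reflexivity|].
  transitivity (sumR (Vn n) (fun _ : pt => 0)); [|apply sumR_0].
  apply sumR_ext. intros. rewrite IH. ring.
Qed.

Lemma expect_sumR {A} n (l : list A) G vs acc :
  expect n (fun c => sumR l (fun a => G a c)) vs acc = sumR l (fun a => expect n (G a) vs acc).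
Proof.
  revert acc. induction vs as [|v vs IH]; intros acc; cbn [expect]; [reflexivity|].
  rewrite (sumR_ext _ _
    (fun w => sumR l (fun a => pchoose n v w * expect n (G a) vs ((v, w) :: acc)))).
  - apply sumR_comm.
  - intros w _. now rewrite IH, sumR_mul_l.
Qed.

Definition prodR {A} (l : list A) (f : A -> R) : R := fold_right Rmult 1 (map f l).

Lemma prodR_ext {A} l (f g : A -> R) : (forall x, In x l -> f x = g x) -> prodR l f = prodR l g.
Proof. intros H. unfold prodR. f_equal. now apply map_ext_in. Qed.

Lemma prodR_split (K : list pt) v a (B : pt -> R) : NoDup K ->
  prodR K (fun x => if pt_dec x v then a else B x)
  = (if in_dec pt_dec v K then a else 1) * prodR K (fun x => if pt_dec x v then 1 else B x).
Proof.
  induction 1 as [|k K Hk HK IH]; unfold prodR in *; cbn [map fold_right].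
  - destruct (in_dec pt_dec v []) as [[]|]. ring.
  - rewrite IH. destruct (in_dec pt_dec v (k :: K)) as [Hin|Hin], (pt_dec k v) as [->|Hne].
    + destruct (in_dec pt_dec v K); [contradiction|ring].
    + destruct Hin as [->|Hin]; [congruence|]. destruct (in_dec pt_dec v K); [ring|contradiction].
    + destruct Hin. now left.
    + destruct (in_dec pt_dec v K); [destruct Hin; now right|ring].
Qed.

(* The choices of distinct vertices are independent. *)
Lemma expect_prodR n (K : list pt) (phi : pt -> option pt -> R) vs acc :
  NoDup K -> NoDup vs -> (forall v, In v vs -> sumR (Vn n) (pchoose n v) = 1) ->
  expect n (fun c => prodR K (fun x => phi x (lookup c x))) vs acc
  = prodR K (fun x => if in_dec pt_dec x vs
                      then sumR (Vn n) (fun w => pchoose n x w * phi x (Some w))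
                      else phi x (lookup acc x)).
Proof.
  intros HK Hvs. revert acc. induction Hvs as [|v vs Hv Hvs IH]; intros acc Hs; cbn [expect].
  - apply prodR_ext. intros x _. now destruct (in_dec pt_dec x []).
  - set (Ex := fun x => sumR (Vn n) (fun w => pchoose n x w * phi x (Some w))).
    set (Bx := fun x => if in_dec pt_dec x vs then Ex x else phi x (lookup acc x)).
    assert (Hw : forall w,
      expect n (fun c => prodR K (fun x => phi x (lookup c x))) vs ((v, w) :: acc)
      = prodR K (fun x => if pt_dec x v then phi v (Some w) else Bx x)).
    { intros w. rewrite IH by (intros; apply Hs; now right). apply prodR_ext. intros x _.
      unfold Bx. cbn. destruct (pt_dec x v) as [->|Hne].
      - destruct (in_dec pt_dec v vs); [contradiction|]. now rewrite ptb_refl.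
      - now rewrite ptb_false by auto. }
    rewrite (sumR_ext _ _ (fun w => prodR K (fun x => if pt_dec x v then 1 else Bx x)
                         * (pchoose n v w * (if in_dec pt_dec v K then phi v (Some w) else 1))))
      by (intros w _; rewrite Hw, prodR_split by exact HK; ring).
    rewrite sumR_mul_l.
    transitivity (prodR K (fun x => if pt_dec x v then Ex v else Bx x)).
    + rewrite (prodR_split K v (Ex v) Bx HK). destruct (in_dec pt_dec v K); [fold (Ex v); ring|].
      rewrite (sumR_ext _ _ (pchoose n v)), Hs by (intros; ring || now left). ring.
    + apply prodR_ext. intros x _. unfold Bx. destruct (pt_dec x v) as [->|Hne].
      * destruct (in_dec pt_dec v (v :: vs)) as [|[]]; [reflexivity|now left].
      * destruct (in_dec pt_dec x (v :: vs)) as [[E|Hx]|Hx]; [congruence| |].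
        -- destruct (in_dec pt_dec x vs); [reflexivity|contradiction].
        -- destruct (in_dec pt_dec x vs); [exfalso; apply Hx; now right|reflexivity].
Qed.

(** * Long-range triangles *)

Definition choice_ind (o : option pt) (y : pt) : R :=
  match o with Some z => if ptb z y then 1 else 0 | None => 0 end.

Definition cycle_next (u a b x : pt) : pt := if ptb x u then a else if ptb x a then b else u.

(* Indicator of the long-range choices u -> a -> b -> u. *)
Definition triangle_ind (u a b : pt) (c : list (pt * pt)) : R :=
  prodR [u; a; b] (fun x => choice_ind (lookup c x) (cycle_next u a b x)).

Definition distinct3 (u a b : pt) : bool := negb (ptb u a) && negb (ptb u b) && negb (ptb a b).

Lemma choice_ind_nonneg o y : 0 <= choice_ind o y.
Proof. destruct o as [z|]; cbn; [destruct (ptb z y)|]; lra. Qed.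

Lemma triangle_ind_nonneg u a b c : 0 <= triangle_ind u a b c.
Proof.
  unfold triangle_ind, prodR. cbn [map fold_right].
  repeat apply Rmult_le_pos; try apply choice_ind_nonneg; lra.
Qed.

Lemma distinct3_spec u a b : distinct3 u a b = true <-> u <> a /\ u <> b /\ a <> b.
Proof.
  unfold distinct3.
  rewrite !andb_true_iff, !negb_true_iff, <- !not_true_iff_false, !ptb_spec. tauto.
Qed.

Lemma Cb_choice_ind c x y : Cb c x y = true -> choice_ind (lookup c x) y = 1.
Proof. unfold Cb, choice_ind. destruct (lookup c x); [intros ->; reflexivity|discriminate]. Qed.

Lemma E7_le_sum_triangle_ind n u c :
  (if E7 n u c then 1 else 0)
  <= sumR (Vn n) (fun a => sumR (Vn n) (fun b =>
       if distinct3 u a b then triangle_ind u a b c else 0)).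
Proof.
  set (t a b := if distinct3 u a b then triangle_ind u a b c else 0).
  change ((if E7 n u c then 1 else 0) <= sumR (Vn n) (fun a => sumR (Vn n) (t a))).
  assert (Hnn : forall a b, 0 <= t a b)
    by (intros; unfold t; destruct (distinct3 u a b); [apply triangle_ind_nonneg|lra]).
  destruct (E7 n u c) eqn:E.
  - unfold E7 in E. apply existsb_exists in E as (a & Ha & E).
    apply existsb_exists in E as (b & Hb & E).
    rewrite !andb_true_iff in E. destruct E as (((((H1 & H2) & H3) & H4) & H5) & H6).
    unfold typew in H4, H5, H6. apply andb_true_iff in H4 as [_ H4], H5 as [_ H5], H6 as [_ H6].
    assert (Hd : distinct3 u a b = true) by (unfold distinct3; now rewrite H1, H2, H3).
    apply distinct3_spec in Hd as Hd'. destruct Hd' as (Hua & Hub & Hab).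
    assert (Htri : triangle_ind u a b c = 1).
    { unfold triangle_ind, prodR, cycle_next. cbn [map fold_right].
      rewrite ptb_refl, (ptb_false a u), ptb_refl, (ptb_false b u), (ptb_false b a) by auto.
      rewrite (Cb_choice_ind _ _ _ H4), (Cb_choice_ind _ _ _ H5), (Cb_choice_ind _ _ _ H6). ring. }
    replace 1 with (t a b) by (unfold t; now rewrite Hd).
    apply Rle_trans with (sumR (Vn n) (t a)).
    + apply (sumR_ge_term _ (t a)); auto.
    + apply (sumR_ge_term _ (fun a' => sumR (Vn n) (t a'))); auto.
      intros. apply sumR_nonneg. auto.
  - apply sumR_nonneg. intros. apply sumR_nonneg. auto.
Qed.

Lemma sumR_choice_ind (l : list pt) y (g : pt -> R) :
  NoDup l -> In y l -> sumR l (fun w => g w * choice_ind (Some w) y) = g y.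
Proof.
  induction 1 as [|a l Ha Hl IH]; intros Hy; [destruct Hy|].
  rewrite sumR_cons. change (choice_ind (Some a) y) with (if ptb a y then 1 else 0).
  destruct Hy as [<-|Hy].
  - rewrite ptb_refl, (sumR_ext _ _ (fun _ => 0)), sumR_0; [ring|].
    intros w Hw. cbn. rewrite ptb_false by congruence. ring.
  - rewrite ptb_false, IH by (auto; congruence). ring.
Qed.

Lemma expect_triangle_ind n u a b :
  (forall v, In v (Vn n) -> 0 < norm_sum n v) -> In u (Vn n) -> In a (Vn n) -> In b (Vn n) ->
  u <> a -> u <> b -> a <> b ->
  expect n (triangle_ind u a b) (Vn n) [] = pchoose n u a * pchoose n a b * pchoose n b u.
Proof.
  intros HS Hu Ha Hb Hua Hub Hab. unfold triangle_ind.
  rewrite (expect_prodR n [u; a; b] (fun x o => choice_ind o (cycle_next u a b x)));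
    [|repeat constructor; cbn; intuition|apply NoDup_Vn|].
  - unfold prodR. cbn [map fold_right].
    destruct (in_dec pt_dec u (Vn n)), (in_dec pt_dec a (Vn n)), (in_dec pt_dec b (Vn n));
      try contradiction.
    unfold cycle_next. rewrite ptb_refl, (ptb_false a u), ptb_refl, (ptb_false b u), (ptb_false b a)
      by auto.
    rewrite !sumR_choice_ind by (auto; apply NoDup_Vn). ring.
  - intros v Hv. now apply sumR_pchoose, HS.
Qed.

Lemma Pr_E7_le n u :
  (forall v, In v (Vn n) -> 0 < norm_sum n v) -> In u (Vn n) ->
  Pr n (E7 n u) <= sumR (Vn n) (fun a => sumR (Vn n) (fun b =>
                     pchoose n u a * pchoose n a b * pchoose n b u)).
Proof.
  intros HS Hu. unfold Pr. rewrite prodExp_expect.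
  eapply Rle_trans; [apply expect_le, (E7_le_sum_triangle_ind n u)|].
  rewrite expect_sumR. apply sumR_le. intros a Ha. rewrite expect_sumR. apply sumR_le. intros b Hb.
  destruct (distinct3 u a b) eqn:E.
  - apply distinct3_spec in E as (Hua & Hub & Hab).
    rewrite expect_triangle_ind by auto. lra.
  - rewrite expect_0. repeat apply Rmult_le_pos; apply pchoose_nonneg.
Qed.

Lemma norm_sum_ge_1 n v : (1 <= n)%nat -> In v (Vn n) -> 1 <= norm_sum n v.
Proof.
  intros Hn Hv. pose proof (norm_sum_ge n v Hn Hv).
  pose proof (ln_nonneg (INR n / 3 + 1) ltac:(pose proof (pos_INR n); lra)). lra.
Qed.

Lemma Zu_le n v : (1 <= n)%nat -> In v (Vn n) -> 0 <= Zu n v <= / (1 + ln (INR n / 3 + 1)).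
Proof.
  intros Hn Hv. rewrite Zu_norm_sum. pose proof (norm_sum_ge_1 n v Hn Hv).
  split; [apply Rinv_nonneg; lra|].
  apply Rinv_le_contravar; [|now apply norm_sum_ge].
  pose proof (ln_nonneg (INR n / 3 + 1) ltac:(pose proof (pos_INR n); lra)). lra.
Qed.

Lemma sumR_two_steps_le n a u M :
  In a (Vn n) -> In u (Vn n) -> (forall v, In v (Vn n) -> 0 <= Zu n v <= M) ->
  sumR (Vn n) (fun b => pchoose n a b * pchoose n b u) <= 50 * M ^ 2.
Proof.
  intros Ha Hu HZ. destruct (HZ a Ha) as [Za Ma].
  apply Rle_trans with (sumR (Vn n) (fun b => M ^ 2 / 2 * (weight n a b ^ 2 + weight n b u ^ 2))).
  - apply sumR_le. intros b Hb. rewrite !pchoose_weight. destruct (HZ b Hb) as [Zb Mb].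
    pose proof (weight_nonneg n a b). pose proof (weight_nonneg n b u).
    assert (Hzz : Zu n a * Zu n b <= M ^ 2) by (rewrite <- Rsqr_pow2; now apply Rmult_le_compat).
    assert (Hww : weight n a b * weight n b u <= (weight n a b ^ 2 + weight n b u ^ 2) / 2)
      by (pose proof (pow2_ge_0 (weight n a b - weight n b u)); nra).
    replace (Zu n a * weight n a b * (Zu n b * weight n b u))
      with ((Zu n a * Zu n b) * (weight n a b * weight n b u)) by ring.
    replace (M ^ 2 / 2 * (weight n a b ^ 2 + weight n b u ^ 2))
      with (M ^ 2 * ((weight n a b ^ 2 + weight n b u ^ 2) / 2)) by field.
    apply Rmult_le_compat; auto using Rmult_le_pos.
  - rewrite sumR_mul_l, sumR_add.
    pose proof (sumR_weight_sq_le n a Ha). pose proof (sumR_weight_sq_rev_le n u Hu).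
    assert (0 <= M ^ 2 / 2) by (pose proof (pow2_ge_0 M); lra). nra.
Qed.

Lemma sumR_triangles_le n u M :
  In u (Vn n) -> (forall v, In v (Vn n) -> 0 < norm_sum n v) ->
  (forall v, In v (Vn n) -> 0 <= Zu n v <= M) ->
  sumR (Vn n) (fun a => sumR (Vn n) (fun b => pchoose n u a * pchoose n a b * pchoose n b u))
  <= 50 * M ^ 2.
Proof.
  intros Hu HS HZ.
  apply Rle_trans with (sumR (Vn n) (fun a => pchoose n u a * (50 * M ^ 2))).
  - apply sumR_le. intros a Ha.
    rewrite (sumR_ext _ _ (fun b => pchoose n u a * (pchoose n a b * pchoose n b u)))
      by (intros; ring).
    rewrite sumR_mul_l. apply Rmult_le_compat_l; [apply pchoose_nonneg|].
    now apply sumR_two_steps_le.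
  - rewrite sumR_mul_r, sumR_pchoose by auto. lra.
Qed.

Lemma zeta3_ge_1 z : infinite_sum (fun i => / INR (S i) ^ 3) z -> 1 <= z.
Proof.
  intros H.
  assert (Hs : forall m, 1 <= sum_f_R0 (fun i => / INR (S i) ^ 3) m).
  { induction m as [|m IH]; [cbn; lra|].
    assert (0 <= / INR (S (S m)) ^ 3) by (apply Rinv_nonneg, pow_le, pos_INR).
    cbn [sum_f_R0]. lra. }
  destruct (Rle_lt_dec 1 z) as [Hz|Hz]; [exact Hz|].
  destruct (H (1 - z)) as [N HN]; [lra|]. specialize (HN N (Nat.le_refl N)).
  specialize (Hs N). unfold R_dist in HN. apply Rabs_def2 in HN. lra.
Qed.

Lemma ln_3_lt : ln 3 < 3 / 2.
Proof.
  assert (3 < exp (3 / 2)).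
  { replace (3 / 2) with (3 / 4 + 3 / 4) by field. rewrite exp_plus.
    pose proof (exp_ineq1_le (3 / 4)). nra. }
  rewrite <- (ln_exp (3 / 2)). apply ln_increasing; lra.
Qed.

(* With [s = 1 + ln (n/3 + 1)] we have [ln (n + 1) <= ln 3 + (s - 1) < 3 s / 2], so
   the right-hand side is at least [112.5 / ln^2 (n + 1) > 50 / s^2]. *)
Lemma fifty_inv_sq_lt n z : (1 <= n)%nat -> 1 <= z ->
  50 * (/ (1 + ln (INR n / 3 + 1))) ^ 2
  < 36 * (3 * z + / 8) * (ln (2 * INR n) / (ln (INR n + 1)) ^ 3).
Proof.
  intros Hn Hz.
  assert (HN : 1 <= INR n) by (apply (le_INR 1); auto).
  set (l := ln (INR n / 3 + 1)). set (L := ln (INR n + 1)).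
  assert (Hl : 0 <= l) by (apply ln_nonneg; lra).
  assert (HL : 0 < L) by (unfold L; rewrite <- ln_1; apply ln_increasing; lra).
  assert (HL2 : L <= ln 3 + l)
    by (unfold L, l; rewrite <- ln_mult by lra; apply ln_le; lra).
  assert (H2n : L <= ln (2 * INR n)) by (apply ln_le; lra).
  pose proof ln_3_lt.
  set (s := 1 + l).
  assert (Hs : 1 <= s) by (unfold s; lra).
  assert (HLs : L < 3 / 2 * s) by (unfold s; lra).
  assert (E1 : 112.5 * / L ^ 2 <= 36 * (3 * z + / 8) * (ln (2 * INR n) / L ^ 3)).
  { assert (ln (2 * INR n) / L ^ 3 >= / L ^ 2).
    { replace (/ L ^ 2) with (L / L ^ 3) by (field; lra). unfold Rdiv.
      assert (0 < / L ^ 3) by (apply Rinv_0_lt_compat, pow_lt; lra). nra. }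
    assert (0 < / L ^ 2) by (apply Rinv_0_lt_compat, pow_lt; lra).
    assert (36 * (3 * z + / 8) >= 112.5) by lra. nra. }
  assert (E2 : 50 * (/ s) ^ 2 < 112.5 * / L ^ 2).
  { rewrite pow_inv.
    apply Rmult_lt_reg_r with (s ^ 2 * L ^ 2); [apply Rmult_lt_0_compat; apply pow_lt; lra|].
    replace (50 * / s ^ 2 * (s ^ 2 * L ^ 2)) with (50 * L ^ 2) by (field; lra).
    replace (112.5 * / L ^ 2 * (s ^ 2 * L ^ 2)) with (112.5 * s ^ 2) by (field; lra).
    nra. }
  lra.
Qed.

Theorem lemma11 (n : nat) (u : pt) (zeta3 : R) :
  (1 <= n)%nat -> In u (Vn n) ->
  infinite_sum (fun i => / (INR (S i)) ^ 3) zeta3 ->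
  Pr n (E7 n u) <
    36 * (3 * zeta3 + / 8) * (ln (2 * INR n) / (ln (INR n + 1)) ^ 3).
Proof.
  intros Hn Hu Hz.
  assert (HS : forall v, In v (Vn n) -> 0 < norm_sum n v)
    by (intros v Hv; pose proof (norm_sum_ge_1 n v Hn Hv); lra).
  eapply Rle_lt_trans; [apply Pr_E7_le; auto|].
  eapply Rle_lt_trans; [apply sumR_triangles_le; auto; intros v Hv; now apply Zu_le|].
  apply fifty_inv_sq_lt; [exact Hn|now apply zeta3_ge_1].
Qed.
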